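(* Let $\eta_l\in(0,1]$ and $M\in[0,1]$ be fixed. For $\beta\in[0,1]$ put $r(\beta):=1-\eta_l+M(1-\beta)$, $\zeta(\beta):=M(1-\beta)^2$ and $$\lambda_1(\beta):=\frac{r(\beta)+\beta+\sqrt{(r(\beta)-\beta)^2-4\zeta(\beta)}}{2},$$ where for a negative radicand $D$ the square root is $i\sqrt{|D|}$. Then $$\operatorname*{argmin}_{\beta\in[0,1]}|\lambda_1(\beta)|=\begin{cases}1-\dfrac{\eta_l}{(1-\sqrt M)^2}&\text{if }0\le M\le(1-\sqrt{\eta_l})^2,\\[4pt] 0&\text{if }(1-\sqrt{\eta_l})^2<M\le 1-\eta_l,\\[4pt] 1-\dfrac{\eta_l}{(1+\sqrt M)^2}&\text{if }1-\eta_l\le M\le1.\end{cases}$$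
   Context: In the paper, $\eta_l=\sigma_l^2/\|A\|_F^2$ for the $l$-th largest singular value $\sigma_l$ of a matrix $A$, and $\lambda_1$ is the eigenvalue of larger modulus of the $2\times2$ matrix $\begin{bmatrix} r&\zeta\\-1&\beta\end{bmatrix}$; $|\cdot|$ denotes the modulus of a complex number. *)

From HB Require Import structures.
From mathcomp Require Import all_boot all_order all_algebra.
From mathcomp.real_closed Require Import complex.
Set Implicit Arguments. Unset Strict Implicit. Unset Printing Implicit Defensive.
Import Order.TTheory GRing.Theory Num.Theory.
Local Open Scope ring_scope.

Definition csqrt (R : rcfType) (D : R) : R[i] :=
  if 0 <= D then (Num.sqrt D)%:C%C else ('i * (Num.sqrt (- D))%:C)%C.

Definition r_of (R : rcfType) (eta M beta : R) : R := 1 - eta + M * (1 - beta).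
Definition zeta_of (R : rcfType) (M beta : R) : R := M * (1 - beta) ^+ 2.

Definition lambda1 (R : rcfType) (eta M beta : R) : R[i] :=
  let r := r_of eta M beta in
  let z := zeta_of M beta in
  (((r + beta)%:C)%C + csqrt ((r - beta) ^+ 2 - 4%:R * z)) / 2%:R.

Definition in_argmin01 (R : rcfType) (f : R -> R[i]) (b : R) : Prop :=
  0 <= b <= 1 /\ forall b' : R, 0 <= b' <= 1 -> `|f b| <= `|f b'|.

(* lambda1(beta) is the larger root of x^2 - tr x + det, where tr = r + beta and
   det = r beta + zeta are affine in beta.  For tr >= 0 its modulus is at least
   sqrt det and at least tr / 2; the first bound is attained when the
   discriminant is <= 0 and the second when it vanishes.  The discriminant
   factors as ((1 + sqrt M)^2 (1 - beta) - eta) ((1 - sqrt M)^2 (1 - beta) - eta),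
   so lambda1 is a double root at the candidates 1 - eta / (1 -+ sqrt M)^2.  On
   the side where the discriminant is <= 0 the slope 1 - eta - M of det decides;
   on the other side either tr grows (slope 1 - M), or the double root at the
   candidate stays between the two real roots at beta. *)

From mathcomp Require Import all_boot all_order all_algebra.
From mathcomp.real_closed Require Import complex.
From mathcomp Require Import ring lra.
Set Implicit Arguments. Unset Strict Implicit. Unset Printing Implicit Defensive.
Import Order.TTheory GRing.Theory Num.Theory.
Local Open Scope ring_scope.

Section LargerRoot.
Variable R : rcfType.
Implicit Types s p x : R.

(* The modulus of the root (s + csqrt (s^2 - 4 p)) / 2 of x^2 - s x + p: for a
   negative discriminant the two roots are conjugate, with product p. *)
Definition root_modulus s p : R :=
  let D := s ^+ 2 - 4%:R * p in
  if 0 <= D then `|s + Num.sqrt D| / 2%:R else Num.sqrt p.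

Lemma norm_larger_root s p :
  `|((s%:C)%C + csqrt (s ^+ 2 - 4%:R * p)) / 2%:R| = (root_modulus s p)%:C%C.
Proof.
rewrite normrM normfV normr_nat /root_modulus /csqrt normc_def.
case: ifP => D_ge0 /=.
  by rewrite addr0 expr0n addr0 sqrtr_sqr rmorphM fmorphV rmorph_nat.
have p_ge0 : 0 <= p by move/negbT: D_ge0; rewrite -ltNge => ?; nra.
rewrite !mul0r !mul1r !add0r !subr0 sqr_sqrtr; last by rewrite oppr_ge0 ltW // ltNge D_ge0.
rewrite (_ : _ - _ = (2%:R * Num.sqrt p) ^+ 2); last by rewrite exprMn sqr_sqrtr //; ring.
by rewrite sqrtr_sqr ger0_norm ?mulr_ge0 ?sqrtr_ge0 // rmorphM rmorph_nat mulrAC divff ?mul1r ?pnatr_eq0.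
Qed.

Lemma root_modulus_ge0 s p : 0 <= root_modulus s p.
Proof. by rewrite /root_modulus; case: ifP => _; rewrite ?divr_ge0 ?sqrtr_ge0. Qed.

Lemma root_modulus_double s p :
  0 <= s -> s ^+ 2 = 4%:R * p -> root_modulus s p = s / 2%:R.
Proof. by move=> s_ge0 D0; rewrite /root_modulus D0 subrr lexx sqrtr0 addr0 ger0_norm. Qed.

Lemma sqr_root_modulus_complex s p : s ^+ 2 <= 4%:R * p -> root_modulus s p ^+ 2 = p.
Proof.
move=> D_le0; rewrite /root_modulus; case: ifP => D_ge0; last by rewrite sqr_sqrtr //; nra.
have D0 : s ^+ 2 - 4%:R * p = 0 by apply/eqP; rewrite eq_le D_ge0 subr_le0 D_le0.
rewrite D0 sqrtr0 addr0 expr_div_n real_normK ?num_real //.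
by move/subr0_eq: D0 => ->; field.
Qed.

Lemma le_sqr_root_modulus s p : 0 <= s -> p <= root_modulus s p ^+ 2.
Proof.
move=> s_ge0; rewrite /root_modulus; case: ifP => D_ge0; last first.
  by rewrite sqr_sqrtr //; move/negbT: D_ge0; rewrite -ltNge => ?; nra.
have u_ge0 := sqrtr_ge0 (s ^+ 2 - 4%:R * p); have u2 := sqr_sqrtr D_ge0.
move: (Num.sqrt _) u_ge0 u2 => u u_ge0 u2.
rewrite ger0_norm ?addr_ge0 //; nra.
Qed.

Lemma half_le_root_modulus s p : 0 <= s -> s / 2%:R <= root_modulus s p.
Proof.
move=> s_ge0; have := le_sqr_root_modulus p s_ge0; have := root_modulus_ge0 s p.
rewrite /root_modulus; case: ifP => D_ge0 rho_ge0 rho2.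
  by rewrite ler_pM2r ?invr_gt0 ?ltr0n // ger0_norm ?addr_ge0 ?sqrtr_ge0 // lerDl sqrtr_ge0.
move/negbT: D_ge0; rewrite -ltNge => ?; nra.
Qed.

(* 4 (x^2 - s x + p) = (2 x - s)^2 - D, so x lies below the larger real root. *)
Lemma le_root_modulus x s p : x ^+ 2 - s * x + p <= 0 -> x <= root_modulus s p.
Proof.
move=> px_le0.
have D_ge0 : 0 <= s ^+ 2 - 4%:R * p by have := sqr_ge0 (2%:R * x - s); nra.
rewrite /root_modulus D_ge0.
have u_ge0 := sqrtr_ge0 (s ^+ 2 - 4%:R * p); have u2 := sqr_sqrtr D_ge0.
move: (Num.sqrt _) u_ge0 u2 => u u_ge0 u2.
suff : 2%:R * x <= s + u by have := ler_norm (s + u); lra.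
nra.
Qed.

Lemma root_modulus_le_complex s p s' p' :
  s ^+ 2 <= 4%:R * p -> 0 <= s' -> p <= p' -> root_modulus s p <= root_modulus s' p'.
Proof.
move=> D_le0 s'_ge0 le_pp'.
have := le_sqr_root_modulus p' s'_ge0; have := sqr_root_modulus_complex D_le0.
have := root_modulus_ge0 s p; have := root_modulus_ge0 s' p'.
move: (root_modulus s p) (root_modulus s' p') => rho rho'; nra.
Qed.

End LargerRoot.

(* Trace and determinant of the matrix [[r, zeta], [-1, beta]] of the paper. *)
Definition tr_of (R : rcfType) (eta M beta : R) : R := r_of eta M beta + beta.
Definition det_of (R : rcfType) (eta M beta : R) : R :=
  r_of eta M beta * beta + zeta_of M beta.

Section Lambda1.
Variables (R : rcfType) (eta M : R).
Implicit Types a b e t : R.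

Local Notation tr := (tr_of eta M).
Local Notation det := (det_of eta M).
Local Notation rho b := (root_modulus (tr b) (det b)).

Lemma norm_lambda1 b : `|lambda1 eta M b| = (rho b)%:C%C.
Proof.
rewrite -norm_larger_root /lambda1 /tr_of /det_of.
by congr `|((_ + csqrt _) / _)|; ring.
Qed.

Lemma disc_factor a b : a ^+ 2 = M ->
  tr b ^+ 2 - 4%:R * det b =
  ((1 + a) ^+ 2 * (1 - b) - eta) * ((1 - a) ^+ 2 * (1 - b) - eta).
Proof. by move=> <-; rewrite /tr_of /det_of /r_of /zeta_of; ring. Qed.

Lemma det_sub b b' : det b' - det b = (b - b') * (M + eta - 1).
Proof. by rewrite /det_of /r_of /zeta_of; ring. Qed.

Lemma tr_sub b b' : tr b' - tr b = (b' - b) * (1 - M).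
Proof. by rewrite /tr_of /r_of; ring. Qed.

Lemma tr_ge0 b : eta <= 1 -> 0 <= M -> 0 <= b <= 1 -> 0 <= tr b.
Proof. by move=> ? ? /andP[? ?]; rewrite /tr_of /r_of; nra. Qed.

Lemma quad_at_half_tr a t b : a ^+ 2 = M -> t * (1 - a) ^+ 2 = eta ->
  (tr (1 - t) / 2%:R) ^+ 2 - tr b * (tr (1 - t) / 2%:R) + det b =
  a * eta * (b - (1 - t)).
Proof. by move=> <- <-; rewrite /tr_of /det_of /r_of /zeta_of; field. Qed.

Lemma in_argmin01_root_modulus b : 0 <= b <= 1 ->
  (forall b', 0 <= b' <= 1 -> rho b <= rho b') -> in_argmin01 (lambda1 eta M) b.
Proof. by move=> b01 rho_min; split=> // b' b'01; rewrite !norm_lambda1 lecR rho_min. Qed.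

Lemma argmin_small_M e a :
  eta <= 1 -> 0 <= M -> 0 < e -> e ^+ 2 = eta -> 0 <= a -> a ^+ 2 = M ->
  M <= (1 - e) ^+ 2 -> in_argmin01 (lambda1 eta M) (1 - eta / (1 - a) ^+ 2).
Proof.
move=> eta_le1 M_ge0 e_gt0 e2 a_ge0 a2 M_small.
have eta_gt0 : 0 < eta by rewrite -e2 exprn_gt0.
have e_le1 : e <= 1 by nra.
have a_le : a <= 1 - e by nra.
have sqr_gt0 : 0 < (1 - a) ^+ 2 by rewrite exprn_gt0 // subr_gt0; lra.
have := divfK (lt0r_neq0 sqr_gt0) eta; have := divr_ge0 (ltW eta_gt0) (ltW sqr_gt0).
move: (eta / _) => t t_ge0 t_eta.
have t_le1 : t <= 1 by nra.
have tb01 : 0 <= 1 - t <= 1 by apply/andP; split; lra.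
have D0 : tr (1 - t) ^+ 2 = 4%:R * det (1 - t).
  apply/eqP; rewrite -subr_eq0 (disc_factor _ a2) subKr.
  by rewrite [(1 - a) ^+ 2 * _]mulrC t_eta subrr mulr0.
apply: in_argmin01_root_modulus => // b' b'01.
case: (lerP (1 - t) b') => [tb_le | b_lt].
  apply: root_modulus_le_complex; rewrite ?D0 ?tr_ge0 // -subr_ge0 det_sub.
  by apply: mulr_le0; nra.
rewrite root_modulus_double ?tr_ge0 //; apply: le_root_modulus.
by rewrite (quad_at_half_tr _ a2 t_eta); apply: mulr_ge0_le0; nra.
Qed.

Lemma argmin_mid_M e a :
  eta <= 1 -> 0 <= M -> 0 <= e -> e ^+ 2 = eta -> 0 <= a -> a ^+ 2 = M ->
  (1 - e) ^+ 2 < M <= 1 - eta -> in_argmin01 (lambda1 eta M) 0.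
Proof.
move=> eta_le1 M_ge0 e_ge0 e2 a_ge0 a2 /andP[M_gt M_le].
have a_le1 : a <= 1 by nra.
have a_gt : 1 - e < a by nra.
have D_le0 : tr 0 ^+ 2 <= 4%:R * det 0.
  by rewrite -subr_le0 (disc_factor _ a2) subr0 !mulr1; apply: mulr_ge0_le0; nra.
apply: in_argmin01_root_modulus => [|b' b'01]; first by rewrite lexx ler01.
apply: root_modulus_le_complex => //; first exact: tr_ge0.
by rewrite -subr_ge0 det_sub; case/andP: b'01 => ? ?; nra.
Qed.

Lemma argmin_large_M a :
  0 <= eta -> eta <= 1 -> 0 <= M -> M <= 1 -> 0 <= a -> a ^+ 2 = M ->
  1 - eta <= M -> in_argmin01 (lambda1 eta M) (1 - eta / (1 + a) ^+ 2).
Proof.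
move=> eta_ge0 eta_le1 M_ge0 M_le1 a_ge0 a2 M_large.
have sqr_gt0 : 0 < (1 + a) ^+ 2 by rewrite exprn_gt0 //; lra.
have := divfK (lt0r_neq0 sqr_gt0) eta; have := divr_ge0 eta_ge0 (ltW sqr_gt0).
move: (eta / _) => t t_ge0 t_eta.
have t_le1 : t <= 1 by nra.
have tb01 : 0 <= 1 - t <= 1 by apply/andP; split; lra.
have D0 : tr (1 - t) ^+ 2 = 4%:R * det (1 - t).
  apply/eqP; rewrite -subr_eq0 (disc_factor _ a2) subKr.
  by rewrite [(1 + a) ^+ 2 * _]mulrC t_eta subrr mul0r.
apply: in_argmin01_root_modulus => // b' b'01.
case: (lerP b' (1 - t)) => [b_le | tb_lt].
  apply: root_modulus_le_complex; rewrite ?D0 ?tr_ge0 // -subr_ge0 det_sub.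
  by apply: mulr_ge0; lra.
rewrite root_modulus_double ?tr_ge0 //.
apply: le_trans (half_le_root_modulus _ (tr_ge0 eta_le1 M_ge0 b'01)).
by rewrite ler_pM2r ?invr_gt0 ?ltr0n // -subr_ge0 tr_sub; apply: mulr_ge0; lra.
Qed.

End Lambda1.

Theorem corollary1p3 (R : rcfType) (eta M : R) :
  0 < eta <= 1 -> 0 <= M <= 1 ->
  [/\ M <= (1 - Num.sqrt eta) ^+ 2 ->
        in_argmin01 (lambda1 eta M) (1 - eta / (1 - Num.sqrt M) ^+ 2),
      (1 - Num.sqrt eta) ^+ 2 < M <= 1 - eta ->
        in_argmin01 (lambda1 eta M) 0
    & 1 - eta <= M ->
        in_argmin01 (lambda1 eta M) (1 - eta / (1 + Num.sqrt M) ^+ 2)].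
Proof.
move=> /andP[eta_gt0 eta_le1] /andP[M_ge0 M_le1].
have e2 : Num.sqrt eta ^+ 2 = eta by rewrite sqr_sqrtr // ltW.
have a2 : Num.sqrt M ^+ 2 = M by rewrite sqr_sqrtr.
have e_gt0 : 0 < Num.sqrt eta by rewrite sqrtr_gt0.
have e_ge0 := ltW e_gt0; have eta_ge0 := ltW eta_gt0; have a_ge0 := sqrtr_ge0 M.
split=> M_range.
- exact: (argmin_small_M (e := Num.sqrt eta)).
- exact: (argmin_mid_M (e := Num.sqrt eta) (a := Num.sqrt M)).
- exact: argmin_large_M.
Qed.
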